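(* (i) Every flat and every semibundle of $\mathfrak M$ is a $\boldsymbol\pi$-clique. (ii) Every semiflat and every proper semibundle of $\mathfrak M$ is a $\boldsymbol\rho$-clique.
   Context: Setup. Let $V$ be a vector space of finite dimension $n\ge 3$ over a division ring; $\mathrm{Sub}_j(V)$ is the set of $j$-dimensional subspaces of $V$. Fix $k$ with $1<k<n-1$, a subspace $W$ of $V$ with $w:=\dim W$, and an integer $m$ with $k-(n-w)\le m\le\min\{k,w\}$. For $H\in\mathrm{Sub}_{k-1}(V)$, $B\in\mathrm{Sub}_{k+1}(V)$, $H\subset B$, the $k$-pencil is $\mathbf p(H,B)=\{U\in\mathrm{Sub}_k(V):H\subset U\subset B\}$; the Grassmann space $\mathbf P_k(V)$ has points $\mathrm{Sub}_k(V)$ and lines the $k$-pencils. The spine space $\mathfrak M$ has point set $S=\{U\in\mathrm{Sub}_k(V):\dim(U\cap W)=m\}$ and line set $\mathcal L=\{\ell\cap S:\ell\text{ a $k$-pencil},\ |\ell\cap S|\ge2\}$; points of $\mathrm{Sub}_k(V)\setminus S$ are improper. Each $L\in\mathcal L$ lies in a unique $k$-pencil $\overline L$; $L$ is projective if $L=\overline L$, affine if $|\overline L\setminus L|=1$. Affine lines are parallel if their closures meet in an improper point. A subspace of $\mathfrak M$ is a set $X\subseteq S$ containing every line that meets it in at least two points; it is strong if its points are pairwise collinear; $\overline X$ denotes the smallest subspace of $\mathbf P_k(V)$ containing $X$. A plane of $\mathbf P_k(V)$ is a set $\{U\in\mathrm{Sub}_k(V):Y\subset U\subset Z\}$ with $(\dim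 Y,\dim Z)=(k-2,k+1)$ or $(k-1,k+2)$; a plane of $\mathfrak M$ is $E=P\cap S$ with $P$ a plane of $\mathbf P_k(V)$, containing two distinct lines; $\overline E=P$, and $E$ is projective, punctured or affine according as $P\setminus E$ is empty, a point, or a line. $L_1\,\boldsymbol\pi\,L_2$ iff some plane contains both lines. For a plane $E$ and $U\in\overline E$, $\mathbf p(U,E)=\{L\in\mathcal L:U\in\overline L\subseteq\overline E\}$ is a pencil of lines if $U\in S$ and a parallel pencil if $U\notin S$; $L_1\,\boldsymbol\rho\,L_2$ iff both belong to a common pencil of lines (proper vertex). A $\delta$-clique is a set of lines pairwise $\delta$-related. A flat is $\mathcal L(E)=\{L\in\mathcal L:L\subseteq E\}$ for a plane $E$; a semiflat on $E$ is the set of all projective lines contained in $E$ together with an inclusion-maximal set of pairwise non-parallel affine lines contained in $E$. For a strong subspace $X$ and $U\in\overline X$, the semibundle is $\mathcal L_U(X)=\{L\in\mathcal L:U\in\overline L,\ L\subseteq X\}$; it is proper if $U\in S$. *)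

From HB Require Import structures.
From mathcomp Require Import all_boot all_order all_algebra.
Set Implicit Arguments. Unset Strict Implicit. Unset Printing Implicit Defensive.
Import GRing.Theory.
Local Open Scope ring_scope.

Definition division_ring (R : unitRingType) : Prop :=
  forall x : R, x != 0 -> x \is a GRing.unit.

Section Spine.
Context {R : unitRingType} {V : lmodType R}.

(* subsets of V; a subspace is recorded by having a dimension (finite basis) *)
Definition subsp := V -> Prop.
Definition same (U1 U2 : subsp) : Prop := forall v, U1 v <-> U2 v.
Definition incl (X Y : subsp) : Prop := forall v, X v -> Y v.
Definition meet (X Y : subsp) : subsp := fun v => X v /\ Y v.

Definition lin_indep (s : seq V) : Prop :=
  forall c : seq R, size c = size s ->
    \sum_(i < size s) c`_i *: s`_i = 0 -> forall i, (i < size s)%N -> c`_i = 0.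
Definition span (s : seq V) (v : V) : Prop :=
  exists c : seq R, v = \sum_(i < size s) c`_i *: s`_i.
Definition hasdim (U : subsp) (d : nat) : Prop :=
  exists s : seq V, size s = d /\ lin_indep s /\ forall v, U v <-> span s v.
Definition Sub (j : nat) (U : subsp) : Prop := hasdim U j.

Definition ptset := subsp -> Prop.
Definition lineset := ptset -> Prop.
Definition sameL (L1 L2 : ptset) : Prop := forall U, L1 U <-> L2 U.

Context (k m : nat) (W : subsp).

Definition pointS (U : subsp) : Prop := Sub k U /\ hasdim (meet U W) m.

Definition kpencil (H B : subsp) : ptset :=
  fun U => Sub k U /\ incl H U /\ incl U B.
Definition is_kpencil (l : ptset) : Prop :=
  exists H B, Sub k.-1 H /\ Sub k.+1 B /\ incl H B /\
    forall U, l U <-> kpencil H B U.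

Definition is_line (L : ptset) : Prop :=
  exists l, is_kpencil l /\ (forall U, L U <-> (l U /\ pointS U)) /\
    exists U1 U2, L U1 /\ L U2 /\ ~ same U1 U2.
(* l is the (unique) k-pencil \overline L containing L *)
Definition closure_line (L l : ptset) : Prop :=
  is_kpencil l /\ forall U, L U -> l U.

Definition projective (L : ptset) : Prop :=
  is_line L /\ exists l, closure_line L l /\ forall U, l U -> L U.
Definition affine (L : ptset) : Prop :=
  is_line L /\ exists l, closure_line L l /\
    exists U0, l U0 /\ ~ L U0 /\ forall U, l U -> ~ L U -> same U U0.
Definition parallel (L1 L2 : ptset) : Prop :=
  affine L1 /\ affine L2 /\
  exists l1 l2 U, closure_line L1 l1 /\ closure_line L2 l2 /\
    l1 U /\ l2 U /\ ~ pointS U.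

Definition subspP (Y : ptset) : Prop :=
  (forall U, Y U -> Sub k U) /\
  forall l, is_kpencil l ->
    (exists U1 U2, l U1 /\ l U2 /\ Y U1 /\ Y U2 /\ ~ same U1 U2) ->
    forall U, l U -> Y U.
Definition closureP (X : ptset) (U : subsp) : Prop :=
  forall Y, subspP Y -> (forall U', X U' -> Y U') -> Y U.

Definition subspM (X : ptset) : Prop :=
  (forall U, X U -> pointS U) /\
  forall L, is_line L ->
    (exists U1 U2, L U1 /\ L U2 /\ X U1 /\ X U2 /\ ~ same U1 U2) ->
    forall U, L U -> X U.
Definition strong (X : ptset) : Prop :=
  subspM X /\ forall U1 U2, X U1 -> X U2 -> ~ same U1 U2 ->
    exists L, is_line L /\ L U1 /\ L U2.

Definition planeP (P : ptset) : Prop :=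
  exists Y Z, ((Sub (k - 2) Y /\ Sub k.+1 Z) \/ (Sub k.-1 Y /\ Sub k.+2 Z)) /\
    incl Y Z /\ forall U, P U <-> (Sub k U /\ incl Y U /\ incl U Z).
(* L is contained in the plane E = P \cap S *)
Definition inE (P L : ptset) : Prop := forall U, L U -> P U /\ pointS U.
(* E = P \cap S is a plane of the spine space (with \overline E = P) *)
Definition planeM (P : ptset) : Prop :=
  planeP P /\ exists L1 L2, is_line L1 /\ is_line L2 /\ inE P L1 /\ inE P L2 /\
    ~ sameL L1 L2.

Definition pi_rel (L1 L2 : ptset) : Prop :=
  exists P, planeM P /\ inE P L1 /\ inE P L2.

(* L \in p(U, E) with \overline E = P *)
Definition in_pencil (P : ptset) (U : subsp) (L : ptset) : Prop :=
  is_line L /\ exists l, closure_line L l /\ l U /\ forall U', l U' -> P U'.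
Definition rho_rel (L1 L2 : ptset) : Prop :=
  exists P U, planeM P /\ P U /\ pointS U /\ in_pencil P U L1 /\ in_pencil P U L2.

Definition clique (rel : ptset -> ptset -> Prop) (C : lineset) : Prop :=
  forall L1 L2, C L1 -> C L2 -> ~ sameL L1 L2 -> rel L1 L2.

Definition flat (C : lineset) : Prop :=
  exists P, planeM P /\ forall L, C L <-> (is_line L /\ inE P L).

Definition nonparallel_set (A : lineset) : Prop :=
  forall L1 L2, A L1 -> A L2 -> ~ sameL L1 L2 -> ~ parallel L1 L2.
Definition semiflat (C : lineset) : Prop :=
  exists P, planeM P /\ exists A : lineset,
    (forall L, A L -> affine L /\ inE P L) /\ nonparallel_set A /\
    (forall A' : lineset, (forall L, A' L -> affine L /\ inE P L) ->
        nonparallel_set A' -> (forall L, A L -> A' L) ->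
        forall L, A' L -> exists L', A L' /\ sameL L L') /\
    forall L, C L <-> ((projective L /\ inE P L) \/ A L).

Definition semibundle_at (X : ptset) (U : subsp) (C : lineset) : Prop :=
  strong X /\ closureP X U /\
  forall L, C L <-> (is_line L /\ (exists l, closure_line L l /\ l U) /\
                     forall U', L U' -> X U').
Definition semibundle (C : lineset) : Prop :=
  exists X U, semibundle_at X U C.
Definition proper_semibundle (C : lineset) : Prop :=
  exists X U, semibundle_at X U C /\ pointS U.

End Spine.

(* Every line of the spine space is the set of proper points of a unique
   k-pencil p(H, B) of P_k(V).  Two distinct pencils through a common point U
   lie in a common plane when they share their bottom H, giving the plane
   [H, B1 + B2], or their top B, giving the plane [H1 ∩ H2, B].  For two lines of
   a strong subspace through U one of the two always happens: if H1 is not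
   contained in a second point U2 of the second line, then U = H2 + H1, and a
   line through U2 and a point U1 of the first line has a top containing U,
   U1 and U2, hence equal to both B1 and B2.  Conversely, two distinct lines
   in a plane share its top or bottom and so meet in a point of P_k(V); in a
   semiflat that point is proper, since otherwise the two lines would be
   parallel.  The dimension counting over the division ring rests on the
   Steinitz exchange lemma, proved by Gaussian elimination. *)

From Pilot Require Import Defs.
From mathcomp Require Import all_boot all_order all_algebra zify.
From Stdlib Require Import Classical IndefiniteDescription.
Import GRing.Theory.
Local Open Scope ring_scope.

Section SpineSpace.
Context {R : unitRingType} {V : lmodType R}.

Definition fspan (n : nat) (f : nat -> V) : @subsp R V :=
  fun v => exists c : nat -> R, v = \sum_(i < n) c i *: f i.
Definition ffree (n : nat) (f : nat -> V) : Prop :=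
  forall c : nat -> R, \sum_(i < n) c i *: f i = 0 -> forall i, (i < n)%N -> c i = 0.

Lemma fspan0 n f : fspan n f 0.
Proof. exists (fun _ => 0); by rewrite big1 // => i _; rewrite scale0r. Qed.

Lemma fspanD n f u v : fspan n f u -> fspan n f v -> fspan n f (u + v).
Proof.
move=> [c ->] [d ->]; exists (fun i => c i + d i).
by rewrite -big_split /=; apply: eq_bigr => i _; rewrite scalerDl.
Qed.

Lemma fspanZ n f a v : fspan n f v -> fspan n f (a *: v).
Proof.
move=> [c ->]; exists (fun i => a * c i).
by rewrite scaler_sumr; apply: eq_bigr => i _; rewrite scalerA.
Qed.

Lemma fspanN n f v : fspan n f v -> fspan n f (- v).
Proof. by move=> h; rewrite -scaleN1r; apply: fspanZ. Qed.

Lemma fspan_sum n f m (c : nat -> R) g :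
  (forall i, (i < m)%N -> fspan n f (g i)) -> fspan n f (\sum_(i < m) c i *: g i).
Proof.
elim: m => [|m IH] H; first by rewrite big_ord0; apply: fspan0.
rewrite big_ord_recr /=; apply: fspanD; last by apply/fspanZ/H.
by apply: IH => i Hi; apply: H; lia.
Qed.

Lemma fspan_trans m g n f :
  (forall i, (i < m)%N -> fspan n f (g i)) -> incl (fspan m g) (fspan n f).
Proof. by move=> H v [c ->]; apply: fspan_sum. Qed.

Lemma fspan_gen {n f j} : (j < n)%N -> fspan n f (f j).
Proof.
move=> Hj; exists (fun i => if i == j then 1 else 0).
rewrite (bigD1 (Ordinal Hj)) //= eqxx scale1r big1 ?addr0 // => i Hi.
have -> : (nat_of_ord i == j) = false.
  by apply/negbTE; apply: contra Hi => /eqP e; apply/eqP/val_inj.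
by rewrite scale0r.
Qed.

Lemma bounded_choice {A : Type} {m} (a0 : A) (P : nat -> A -> Prop) :
  (forall i, (i < m)%N -> exists a, P i a) ->
  exists F : nat -> A, forall i, (i < m)%N -> P i (F i).
Proof.
move=> H; apply: (functional_choice (fun i a => (i < m)%N -> P i a)) => i.
case: (ltnP i m) => [/H [a Ha] | _]; first by exists a.
by exists a0.
Qed.

Definition frcons (f : nat -> V) n x := fun i => if i == n then x else f i.

Lemma sum_frcons n f x (c : nat -> R) :
  \sum_(i < n.+1) c i *: frcons f n x i = \sum_(i < n) c i *: f i + c n *: x.
Proof.
rewrite big_ord_recr /= /frcons eqxx; congr (_ + _); apply: eq_bigr => i _.
by rewrite /= (ltn_eqF (ltn_ord i)).
Qed.

(* One step of Gaussian elimination: pivoting on [g j] removes the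
   [a]-coordinate from the remaining vectors [g (bump j i)]. *)
Definition pivot j (g : nat -> V) (a : nat -> R) i :=
  g (bump j i) - (a (bump j i) / a j) *: g j.

Lemma ltn_bump {j m i} : (i < m)%N -> (bump j i < m.+1)%N.
Proof. rewrite /bump; lia. Qed.

Section Pivot.
Context {m j : nat} {g : nat -> V} {a : nat -> R}.
Hypothesis lt_j : (j < m.+1)%N.

Lemma sum_bump {M : nmodType} (F : nat -> M) :
  \sum_(l < m.+1) F l = F j + \sum_(i < m) F (bump j i).
Proof. by rewrite (bigD1_ord (Ordinal lt_j)). Qed.

Lemma pivotE {x w} : a j \is a GRing.unit ->
  (forall i, (i < m.+1)%N -> g i = a i *: x + w i) ->
  forall i, (i < m)%N -> pivot j g a i = w (bump j i) - (a (bump j i) / a j) *: w j.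
Proof.
move=> Hu Hg i Hi; rewrite /pivot !Hg //; last exact: ltn_bump.
by rewrite scalerDr scalerA divrK // opprD addrACA subrr add0r.
Qed.

Lemma ffree_pivot : ffree m.+1 g -> ffree m (pivot j g a).
Proof.
move=> Hfree d Hd i Hi.
pose c l := if l == j then - \sum_(i < m) d i * (a (bump j i) / a j)
            else d (unbump j l).
have c0 : \sum_(l < m.+1) c l *: g l = 0.
  rewrite (sum_bump (fun l => c l *: g l)) /c eqxx.
  under [X in _ + X]eq_bigr => l _ do rewrite eq_sym (negbTE (neq_bump j l)) bumpK.
  rewrite -[RHS]Hd /pivot.
  under [RHS]eq_bigr => l _ do rewrite scalerBr scalerA.
  by rewrite sumrB -scaler_suml scaleNr addrC.
have := Hfree c c0 (bump j i) (ltn_bump Hi).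
by rewrite /c eq_sym (negbTE (neq_bump j i)) bumpK.
Qed.

Lemma fspan_pivot (c : nat -> R) : a j \is a GRing.unit ->
  \sum_(i < m.+1) c i * a i = 0 ->
  fspan m (pivot j g a) (\sum_(i < m.+1) c i *: g i).
Proof.
move=> Hu Hs; exists (fun i => c (bump j i)).
rewrite (sum_bump (fun l => c l *: g l)) /pivot.
under [RHS]eq_bigr => l _ do rewrite scalerBr scalerA.
rewrite sumrB -scaler_suml addrC; congr (_ + _).
rewrite (sum_bump (fun l => c l * a l)) in Hs.
move/eqP: Hs; rewrite addr_eq0 => /eqP Hs.
rewrite -[c j](mulrK Hu) Hs -scaleNr mulNr mulr_suml.
by congr (- _ *: _); apply: eq_bigr => l _; rewrite mulrA.
Qed.

End Pivot.

Hypothesis HR : division_ring R.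

Lemma ffree_rcons {n f x} : ffree n f -> ~ fspan n f x -> ffree n.+1 (frcons f n x).
Proof.
move=> Hf Hx c; rewrite sum_frcons => c0.
have cn0 : c n = 0.
  case: (eqVneq (c n) 0) => // cn0; exfalso; apply: Hx.
  move/eqP: c0; rewrite addrC addr_eq0 => /eqP e.
  rewrite -[x]scale1r -(mulVr (HR _ cn0)) -scalerA e.
  by apply/fspanZ/fspanN; exists c.
move: c0; rewrite cn0 scale0r addr0 => c0 i Hi.
case: (eqVneq i n) => [->//|ne]; apply: Hf => //; lia.
Qed.

Lemma ffree_fspan_leq n : forall f m g, ffree m g ->
  (forall i, (i < m)%N -> fspan n f (g i)) -> (m <= n)%N.
Proof.
elim: n => [|n IH] f m g Hfree Hsp.
  case: m Hfree Hsp => // m Hfree Hsp.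
  have g0 : \sum_(i < m.+1) (1 : R) *: g i = 0.
    apply: big1 => i _; have [c ->] := Hsp i (ltn_ord i).
    by rewrite big_ord0 scaler0.
  by have /eqP := Hfree (fun _ => 1) g0 0 (ltn0Sn m); rewrite oner_eq0.
have [C HC] := bounded_choice (fun _ => 0) (fun i (c : nat -> R) =>
  g i = \sum_(l < n.+1) c l *: f l) Hsp.
pose a i := C i n; pose w i := \sum_(l < n) C i l *: f l.
have Hg i : (i < m)%N -> g i = a i *: f n + w i.
  by move=> Hi; rewrite HC // big_ord_recr addrC.
have Hw i : fspan n f (w i) by exists (C i).
case: (classic (exists2 j, (j < m)%N & a j != 0)) => [[j Hj Haj]|Hno].
  case: m Hfree Hsp HC Hg Hj => [//|m] Hfree Hsp HC Hg Hj.
  apply: (IH f m (pivot j g a) (ffree_pivot Hj Hfree)) => i Hi.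
  rewrite (pivotE Hj (HR _ Haj) Hg i Hi).
  by apply: fspanD; [apply: Hw | apply/fspanN/fspanZ/Hw].
apply: leq_trans (IH f m g Hfree _) (leqnSn n) => i Hi.
rewrite Hg //; case: (eqVneq (a i) 0) => [->|ne]; last by case: Hno; exists i.
by rewrite scale0r add0r.
Qed.

Lemma fspan_ffree_incl {n f g} : ffree n g ->
  (forall i, (i < n)%N -> fspan n f (g i)) -> incl (fspan n f) (fspan n g).
Proof.
move=> Hg Hgf v Hv; apply: NNPP => Hn.
suff : (n.+1 <= n)%N by rewrite ltnn.
apply: (ffree_fspan_leq n f _ _ (ffree_rcons Hg Hn)) => i Hi; rewrite /frcons.
by case: eqP => // ne; apply: Hgf; lia.
Qed.

Lemma hasdimP (U : @subsp R V) d : hasdim U d <->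
  exists f, ffree d f /\ forall v, U v <-> fspan d f v.
Proof.
have nthE (c : nat -> R) (s : seq V) :
    \sum_(i < d) (mkseq c d)`_i *: s`_i = \sum_(i < d) c i *: s`_i.
  by apply: eq_bigr => i _; rewrite nth_mkseq.
split.
  move=> [s [Hs [Hli Hsp]]]; exists (fun i => s`_i); split.
    move=> c Hc i Hi.
    have := Hli (mkseq c d); rewrite size_mkseq Hs nthE => /(_ erefl Hc i Hi).
    by rewrite nth_mkseq.
  move=> v; rewrite Hsp; split => [[c ->]|[c ->]].
    by exists (fun i => c`_i); rewrite Hs.
  by exists (mkseq c d); rewrite Hs nthE.
move=> [f [Hf Hsp]]; exists (mkseq f d); split; first exact: size_mkseq.
have nthF (c : nat -> R) :
    \sum_(i < d) c i *: (mkseq f d)`_i = \sum_(i < d) c i *: f i.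
  by apply: eq_bigr => i _; rewrite nth_mkseq.
split.
  move=> c _; rewrite size_mkseq => Hsum i Hi.
  by apply: (Hf (fun i => c`_i)) => //; rewrite -nthF.
move=> v; rewrite Hsp; split => [[c ->]|[c ->]].
  by exists (mkseq c d); rewrite size_mkseq nthE nthF.
by exists (fun i => c`_i); rewrite size_mkseq nthF.
Qed.

Section DimMembership.
Context {U : @subsp R V} {d : nat}.
Hypothesis dimU : hasdim U d.

Lemma dim_mem_fspan {m g v} :
  (forall i, (i < m)%N -> U (g i)) -> fspan m g v -> U v.
Proof.
have /hasdimP [f [_ Uf]] := dimU; move=> Ug Hv; apply/Uf.
by apply: fspan_trans Hv => i /Ug /Uf.
Qed.

Lemma dim_memD {u v} : U u -> U v -> U (u + v).
Proof.
have /hasdimP [f [_ Uf]] := dimU.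
by move=> /Uf Hu /Uf Hv; apply/Uf; apply: fspanD.
Qed.

Lemma dim_memZ a {u} : U u -> U (a *: u).
Proof. by have /hasdimP [f [_ Uf]] := dimU; move=> /Uf Hu; apply/Uf/fspanZ. Qed.

Lemma dim_memN {u} : U u -> U (- u).
Proof. by move=> Hu; rewrite -scaleN1r; apply: dim_memZ. Qed.

End DimMembership.

Lemma dim_same {U U' : @subsp R V} {d} : hasdim U d -> same U U' -> hasdim U' d.
Proof.
move=> [s [Hs [Hli Hsp]]] UU'; exists s; split => //; split => // v.
by rewrite -Hsp; apply: iff_sym.
Qed.

Lemma incl_eqdim {A B : @subsp R V} {d} :
  hasdim A d -> hasdim B d -> incl A B -> incl B A.
Proof.
move=> /hasdimP [fa [Ia Sa]] /hasdimP [fb [Ib Sb]] AB v /Sb Bv; apply/Sa.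
by apply: (fspan_ffree_incl Ia) Bv => i Hi; apply/Sb/AB/Sa/fspan_gen.
Qed.

Lemma not_incl_ex {A B : @subsp R V} : ~ incl B A -> exists2 v, B v & ~ A v.
Proof.
move=> nBA; apply: NNPP => nex; apply: nBA => v Bv.
by apply: NNPP => nAv; apply: nex; exists v.
Qed.

Definition adjoin (A : @subsp R V) (x : V) : @subsp R V :=
  fun v => exists a w, A w /\ v = a *: x + w.

Lemma adjoin_incl {A : @subsp R V} {x} : incl A (adjoin A x).
Proof. by move=> v Av; exists 0, v; rewrite scale0r add0r. Qed.

Lemma adjoin_least {A Z : @subsp R V} {x e} :
  hasdim Z e -> incl A Z -> Z x -> incl (adjoin A x) Z.
Proof.
move=> dimZ AZ Zx v [a [w [Aw ->]]].
exact: (dim_memD dimZ (dim_memZ dimZ a Zx) (AZ _ Aw)).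
Qed.

Lemma dim_adjoin {A : @subsp R V} {d x} :
  hasdim A d -> ~ A x -> hasdim (adjoin A x) d.+1.
Proof.
move=> /hasdimP [fa [Ia Sa]] nAx; apply/hasdimP; exists (frcons fa d x); split.
  by apply: ffree_rcons Ia _ => /Sa.
have faE i : (i < d)%N -> fa i = frcons fa d x i by rewrite /frcons => /ltn_eqF ->.
move=> v; split.
  move=> [a [w [/Sa Aw ->]]]; rewrite addrC; apply: fspanD.
    by apply: fspan_trans Aw => i Hi; rewrite faE //; apply: fspan_gen; lia.
  have xE : frcons fa d x d = x by rewrite /frcons eqxx.
  by apply: fspanZ; rewrite -{2}xE; apply: fspan_gen.
move=> [c ->]; rewrite sum_frcons; exists (c d), (\sum_(i < d) c i *: fa i).
by split; [apply/Sa; exists c | rewrite addrC].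
Qed.

Lemma adjoin_decomp {A : @subsp R V} {x m} {g : nat -> V} :
  (forall i, (i < m)%N -> adjoin A x (g i)) ->
  exists a w, forall i, (i < m)%N -> A (w i) /\ g i = a i *: x + w i.
Proof.
move=> Hg; have /(bounded_choice (0, 0)) [F HF] : forall i, (i < m)%N ->
    exists p : R * V, A p.2 /\ g i = p.1 *: x + p.2.
  by move=> i /Hg [a [w aw]]; exists (a, w).
by exists (fun i => (F i).1), (fun i => (F i).2).
Qed.

(* Eliminating the [x]-coordinate from a basis of [B] yields a basis of
   [meet A B]. *)
Lemma dim_meet_adjoin {A B : @subsp R V} {d m x} :
  hasdim A d -> ~ A x -> hasdim B m.+1 -> incl B (adjoin A x) -> ~ incl B A ->
  hasdim (meet A B) m.
Proof.
move=> dimA nAx dimB BAx nBA; have /hasdimP [g [Hg Bg]] := dimB.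
have [a [w Hw]] := adjoin_decomp (fun i Hi => BAx _ (proj2 (Bg _) (fspan_gen Hi))).
have Aw i : (i < m.+1)%N -> A (w i) by move/Hw => [].
have gE i : (i < m.+1)%N -> g i = a i *: x + w i by move/Hw => [].
have [j Hj Haj] : exists2 j, (j < m.+1)%N & a j != 0.
  apply: NNPP => Hno; apply: nBA => v /Bg; apply: (dim_mem_fspan dimA) => i Hi.
  rewrite gE //; case: (eqVneq (a i) 0) => [->|ne]; last by case: Hno; exists i.
  by rewrite scale0r add0r; apply: Aw.
have Hu := HR _ Haj.
apply: (@dim_same (fspan m (pivot j g a))).
  by apply/hasdimP; exists (pivot j g a); split => //; apply: ffree_pivot Hj Hg.
move=> v; split.
  move=> Kv; split.
    apply: (dim_mem_fspan dimA) Kv => i Hi; rewrite (pivotE Hj Hu gE i Hi).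
    exact: (dim_memD dimA (Aw _ (ltn_bump Hi)) (dim_memN dimA (dim_memZ dimA _ (Aw _ Hj)))).
  apply: (dim_mem_fspan dimB) Kv => i Hi.
  have gB l : (l < m.+1)%N -> B (g l) by move=> Hl; apply/Bg/fspan_gen.
  exact: (dim_memD dimB (gB _ (ltn_bump Hi)) (dim_memN dimB (dim_memZ dimB _ (gB _ Hj)))).
move=> [Av /Bg [c Hv]].
have Hsum : v = (\sum_(i < m.+1) c i * a i) *: x + \sum_(i < m.+1) c i *: w i.
  rewrite Hv scaler_suml -big_split; apply: eq_bigr => i _ /=.
  by rewrite gE // scalerDr scalerA.
have [s0|sn0] := eqVneq (\sum_(i < m.+1) c i * a i) 0.
  by rewrite Hv; apply: fspan_pivot.
have Aw_sum : A (\sum_(i < m.+1) c i *: w i).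
  by apply: (dim_mem_fspan dimA Aw); exists c.
case: nAx; rewrite -[x]scale1r -(mulVr (HR _ sn0)) -scalerA.
rewrite -[X in _ *: X](addrK (\sum_(i < m.+1) c i *: w i)) -Hsum.
exact: (dim_memZ dimA _ (dim_memD dimA Av (dim_memN dimA Aw_sum))).
Qed.

Lemma dim_meet_hyperplanes {Z B1 B2 : @subsp R V} {d} :
  hasdim Z d.+2 -> hasdim B1 d.+1 -> hasdim B2 d.+1 ->
  incl B1 Z -> incl B2 Z -> ~ incl B2 B1 -> hasdim (meet B1 B2) d.
Proof.
move=> dimZ dimB1 dimB2 B1Z B2Z nB21; have [b B2b nB1b] := not_incl_ex nB21.
have ZE := incl_eqdim (dim_adjoin dimB1 nB1b) dimZ (adjoin_least dimZ B1Z (B2Z _ B2b)).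
exact: (dim_meet_adjoin dimB1 nB1b dimB2 (fun v Hv => ZE _ (B2Z _ Hv)) nB21).
Qed.

Lemma dim_join_hyperplanes {Y H1 H2 : @subsp R V} {d} :
  hasdim Y d -> hasdim H1 d.+1 -> hasdim H2 d.+1 ->
  incl Y H1 -> incl Y H2 -> ~ incl H2 H1 ->
  exists U, [/\ hasdim U d.+2, incl H1 U, incl H2 U &
    forall (Z : @subsp R V) e, hasdim Z e -> incl H1 Z -> incl H2 Z -> incl U Z].
Proof.
move=> dimY dimH1 dimH2 YH1 YH2 nH21; have [h H2h nH1h] := not_incl_ex nH21.
exists (adjoin H1 h); split.
- exact: dim_adjoin dimH1 nH1h.
- exact: adjoin_incl.
- have dimE := dim_adjoin dimY (fun Yh => nH1h (YH1 _ Yh)).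
  move=> v /(incl_eqdim dimE dimH2 (adjoin_least dimH2 YH2 H2h)) [a [w [Yw ->]]].
  by exists a, w; split => //; apply: YH1.
- by move=> Z e dimZ H1Z H2Z; apply: adjoin_least dimZ H1Z (H2Z _ H2h).
Qed.

Section Pencils.
Context {k : nat}.
Implicit Types (H B U Y Z : @subsp R V).

Lemma kpencil_same {H B U U'} : kpencil k H B U -> same U U' -> kpencil k H B U'.
Proof.
move=> [dimU [HU UB]] UU'; split; first exact: dim_same dimU UU'.
by split => v Hv; [apply/UU'/HU | apply/UB/UU'].
Qed.

Lemma sub_kpencil {Y Z H B} :
  incl Y H -> incl B Z -> forall U, kpencil k H B U -> kpencil k Y Z U.
Proof.
by move=> YH BZ U [dimU [HU UB]]; split => //; split => v; [move/YH/HU | move/UB/BZ].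
Qed.

Lemma meet_incl_bottom {H U1 U2} : (0 < k)%N ->
  hasdim H k.-1 -> hasdim U1 k -> hasdim U2 k -> incl H U1 -> incl H U2 ->
  ~ same U1 U2 -> forall v, U1 v -> U2 v -> H v.
Proof.
move=> k_gt0 dimH dimU1 dimU2 HU1 HU2 nU12 v U1v U2v; apply: NNPP => nHv.
have dimE := dim_adjoin dimH nHv; rewrite prednK // in dimE.
have EU1 := adjoin_least dimU1 HU1 U1v; have EU2 := adjoin_least dimU2 HU2 U2v.
apply: nU12 => u; split => [/(incl_eqdim dimE dimU1 EU1) /EU2 //|].
by move=> /(incl_eqdim dimE dimU2 EU2) /EU1.
Qed.

Lemma top_incl {B U1 U2 Z e} :
  hasdim U1 k -> hasdim U2 k -> hasdim B k.+1 -> incl U1 B -> incl U2 B ->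
  ~ same U1 U2 -> hasdim Z e -> incl U1 Z -> incl U2 Z -> incl B Z.
Proof.
move=> dimU1 dimU2 dimB U1B U2B nU12 dimZ U1Z U2Z.
have [u U2u nU1u] : exists2 u, U2 u & ~ U1 u.
  apply: not_incl_ex => U21; apply: nU12 => v.
  by split; [apply: (incl_eqdim dimU2 dimU1 U21) | apply: U21].
have EB := adjoin_least dimB U1B (U2B _ U2u).
move=> v /(incl_eqdim (dim_adjoin dimU1 nU1u) dimB EB).
exact: adjoin_least dimZ U1Z (U2Z _ U2u) v.
Qed.

Lemma kpencil_incl {H B H' B' U1 U2} : (0 < k)%N ->
  hasdim H k.-1 -> hasdim B k.+1 -> hasdim B' k.+1 ->
  kpencil k H B U1 -> kpencil k H B U2 -> kpencil k H' B' U1 -> kpencil k H' B' U2 ->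
  ~ same U1 U2 -> forall U, kpencil k H B U -> kpencil k H' B' U.
Proof.
move=> k_gt0 dimH dimB dimB' [dimU1 [HU1 U1B]] [dimU2 [HU2 U2B]] [_ [H'U1 U1B']]
  [_ [H'U2 U2B']] nU12.
apply: sub_kpencil.
  move=> v H'v; exact: meet_incl_bottom k_gt0 dimH dimU1 dimU2 HU1 HU2 nU12 v
    (H'U1 _ H'v) (H'U2 _ H'v).
exact: top_incl dimU1 dimU2 dimB U1B U2B nU12 dimB' U1B' U2B'.
Qed.

Lemma plane_common_bottom {H B1 B2 U} :
  hasdim H k.-1 -> hasdim B1 k.+1 -> hasdim B2 k.+1 -> hasdim U k ->
  incl H U -> incl U B1 -> incl U B2 -> ~ incl B2 B1 ->
  exists2 Z, planeP k (kpencil k H Z) & incl B1 Z /\ incl B2 Z.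
Proof.
move=> dimH dimB1 dimB2 dimU HU UB1 UB2 nB21.
have [Z [dimZ B1Z B2Z _]] := dim_join_hyperplanes dimU dimB1 dimB2 UB1 UB2 nB21.
exists Z => //; exists H, Z; split; first by right.
by split => // v /HU /UB1 /B1Z.
Qed.

Lemma plane_common_top {H1 H2 B U} : (1 < k)%N ->
  hasdim H1 k.-1 -> hasdim H2 k.-1 -> hasdim U k ->
  hasdim B k.+1 -> incl H1 U -> incl H2 U -> incl U B -> ~ incl H2 H1 ->
  planeP k (kpencil k (meet H1 H2) B).
Proof.
move=> k_gt1 dimH1 dimH2 dimU dimB H1U H2U UB nH21.
have kE : k = (k - 2).+2 by lia.
have kE' : k.-1 = (k - 2).+1 by lia.
rewrite kE' in dimH1 dimH2; rewrite kE in dimU.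
have dimK := dim_meet_hyperplanes dimU dimH1 dimH2 H1U H2U nH21.
exists (meet H1 H2), B; split; first by left; split => //; rewrite -kE.
by split => // v [/H1U /UB].
Qed.

End Pencils.

Section Lines.
Variables (k m : nat) (W : @subsp R V).
Hypothesis k_gt1 : (1 < k)%N.
Let k_gt0 : (0 < k)%N := ltnW k_gt1.
Local Notation line := (is_line k m W).
Local Notation point := (pointS k m W).
Implicit Types (H B U Y Z : @subsp R V) (L P : @ptset R V).

Definition is_trace H B L := forall U, L U <-> kpencil k H B U /\ point U.

Lemma line_trace {L} : line L ->
  exists H B, [/\ hasdim H k.-1, hasdim B k.+1 & is_trace H B L].
Proof.
move=> [l [[H [B [dimH [dimB [_ Hl]]]]] [HL _]]]; exists H, B; split => // U.
by split => [/HL [/Hl pU sU] | [/Hl pU sU]] //; apply/HL.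
Qed.

Lemma line_other_point {L} U : line L -> exists2 U', L U' & ~ same U U'.
Proof.
move=> [_ [_ [_ [Ua [Ub [La [Lb nab]]]]]]].
case: (classic (same U Ua)) => [Ua_U|]; last by exists Ua.
by exists Ub => // Ub_U; apply: nab => v; split => [/Ua_U /Ub_U | /Ub_U /Ua_U].
Qed.

Lemma trace_incl {H B L} : is_trace H B L -> line L -> incl H B.
Proof. by move=> HL [_ [_ [_ [U [_ [/HL [[_ [HU UB]] _] _]]]]]] v /HU /UB. Qed.

Lemma closure_line_trace {H B L l} : hasdim H k.-1 -> hasdim B k.+1 ->
  is_trace H B L -> line L -> closure_line k L l ->
  forall U, l U <-> kpencil k H B U.
Proof.
move=> dimH dimB HL [_ [_ [_ [U1 [U2 [L1 [L2 nU12]]]]]]]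
  [[H' [B' [dimH' [dimB' [_ Hl]]]]] Ll] U.
have [p1 _] := proj1 (HL _) L1; have [p2 _] := proj1 (HL _) L2.
have p1' := proj1 (Hl _) (Ll _ L1); have p2' := proj1 (Hl _) (Ll _ L2).
split => [/Hl | pU]; first exact: kpencil_incl k_gt0 dimH' dimB' dimB p1' p2' p1 p2 nU12 U.
by apply/Hl; apply: kpencil_incl k_gt0 dimH dimB dimB' p1 p2 p1' p2' nU12 U pU.
Qed.

Lemma closure_line_kpencil {H B L} : hasdim H k.-1 -> hasdim B k.+1 ->
  is_trace H B L -> line L -> closure_line k L (kpencil k H B).
Proof.
move=> dimH dimB HL lL; split; last by move=> U /HL [].
by exists H, B; do 3!split => //; apply: trace_incl HL lL.
Qed.

Lemma trace_in_plane {P H B L Y Z e} : hasdim H k.-1 -> hasdim B k.+1 -> hasdim Z e ->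
  is_trace H B L -> line L -> Defs.inE k m W P L ->
  (forall U, P U <-> kpencil k Y Z U) -> incl Y H /\ incl B Z.
Proof.
move=> dimH dimB dimZ HL [_ [_ [_ [Ua [Ub [La [Lb nab]]]]]]] LP PE.
have [[dima [HUa UaB]] _] := proj1 (HL _) La.
have [[dimb [HUb UbB]] _] := proj1 (HL _) Lb.
have [_ [YUa UaZ]] := proj1 (PE _) (proj1 (LP _ La)).
have [_ [YUb UbZ]] := proj1 (PE _) (proj1 (LP _ Lb)).
split; last exact: top_incl dima dimb dimB UaB UbB nab dimZ UaZ UbZ.
move=> v Yv.
exact: (meet_incl_bottom k_gt0 dimH dima dimb HUa HUb nab v (YUa _ Yv) (YUb _ Yv)).
Qed.

Lemma in_pencil_trace {P H B L U} : hasdim H k.-1 -> hasdim B k.+1 ->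
  is_trace H B L -> line L -> kpencil k H B U ->
  (forall U', kpencil k H B U' -> P U') -> in_pencil k m W P U L.
Proof.
move=> dimH dimB HL lL pU HP; split => //; exists (kpencil k H B).
by split => //; apply: closure_line_kpencil.
Qed.

Lemma in_pencil_inE {P U L} : in_pencil k m W P U L -> Defs.inE k m W P L.
Proof.
move=> [[l [_ [HL _]]] [l' [[_ Ll'] [_ l'P]]]] U' LU'.
by split; [apply/l'P/Ll' | have /HL [] := LU'].
Qed.

Section TwoLines.
Context {H1 B1 H2 B2 : @subsp R V} {L1 L2 : @ptset R V}.
Hypotheses (dimH1 : hasdim H1 k.-1) (dimB1 : hasdim B1 k.+1).
Hypotheses (dimH2 : hasdim H2 k.-1) (dimB2 : hasdim B2 k.+1).
Hypotheses (HL1 : is_trace H1 B1 L1) (HL2 : is_trace H2 B2 L2).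

Lemma trace_sameL : incl H2 H1 -> incl B2 B1 -> sameL L1 L2.
Proof.
move=> H21 B21; have H12 := incl_eqdim dimH2 dimH1 H21.
have B12 := incl_eqdim dimB2 dimB1 B21.
move=> U; split => [/HL1 [pU sU] | /HL2 [pU sU]].
  by apply/HL2; split => //; apply: sub_kpencil pU.
by apply/HL1; split => //; apply: sub_kpencil pU.
Qed.

Lemma trace_sameL_of2 {Ua Ub} :
  kpencil k H1 B1 Ua -> kpencil k H1 B1 Ub -> kpencil k H2 B2 Ua ->
  kpencil k H2 B2 Ub -> ~ same Ua Ub -> sameL L1 L2.
Proof.
move=> a1 b1 a2 b2 nab U; split => [/HL1 [pU sU] | /HL2 [pU sU]].
  by apply/HL2; split => //; apply: kpencil_incl k_gt0 dimH1 dimB1 dimB2 a1 b1 a2 b2 nab U pU.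
by apply/HL1; split => //; apply: kpencil_incl k_gt0 dimH2 dimB2 dimB1 a2 b2 a1 b1 nab U pU.
Qed.

Hypotheses (lL1 : line L1) (lL2 : line L2) (nL : ~ sameL L1 L2).

(* Collinearity of [U1] and [U2] puts [U = H2 + x] inside the top [B] of the
   line joining them; [B] then contains both tops. *)
Lemma strong_lines_common_top {X U U2} : strong k m W X ->
  (forall U', L1 U' -> X U') -> (forall U', L2 U' -> X U') ->
  kpencil k H1 B1 U -> kpencil k H2 B2 U ->
  L2 U2 -> ~ same U U2 -> ~ incl H1 U2 -> incl B2 B1.
Proof.
move=> [_ strX] X1 X2 pU1 pU2 L2U2 nUU2 nH1U2.
have [U1 L1U1 nUU1] := line_other_point U lL1.
have [p1 _] := proj1 (HL1 _) L1U1; have [p2 _] := proj1 (HL2 _) L2U2.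
have nU12 : ~ same U1 U2.
  move=> U12; apply: nL; apply: (trace_sameL_of2 pU1 p1 pU2 _ nUU1).
  by apply: kpencil_same p2 _ => v; split => /U12.
have [dimU1 [H1U1 U1B1]] := p1; have [dimU2 [H2U2 U2B2]] := p2.
have [dimU [H1U UB1]] := pU1; have [_ [H2U UB2]] := pU2.
have [L [lL [LU1 LU2]]] := strX U1 U2 (X1 _ L1U1) (X2 _ L2U2) nU12.
have [H [B [dimH dimB HL]]] := line_trace lL.
have [[_ [_ U1B]] _] := proj1 (HL _) LU1; have [[_ [_ U2B]] _] := proj1 (HL _) LU2.
have [x H1x nU2x] := not_incl_ex nH1U2.
have dimE := dim_adjoin dimH2 (fun H2x => nU2x (H2U2 _ H2x)); rewrite prednK // in dimE.
have UE := incl_eqdim dimE dimU (adjoin_least dimU H2U (H1U _ H1x)).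
have EB := adjoin_least dimB (fun v H2v => U2B _ (H2U2 _ H2v)) (U1B _ (H1U1 _ H1x)).
have UB : incl U B by move=> v /UE /EB.
have B1B := top_incl dimU dimU1 dimB1 UB1 U1B1 nUU1 dimB UB U1B.
have B2B := top_incl dimU dimU2 dimB2 UB2 U2B2 nUU2 dimB UB U2B.
by move=> v /B2B; apply: (incl_eqdim dimB1 dimB B1B).
Qed.

Lemma strong_lines_plane {X U} : strong k m W X ->
  (forall U', L1 U' -> X U') -> (forall U', L2 U' -> X U') ->
  kpencil k H1 B1 U -> kpencil k H2 B2 U ->
  exists Y Z, [/\ planeP k (kpencil k Y Z), incl Y H1, incl Y H2, incl B1 Z & incl B2 Z].
Proof.
move=> strX X1 X2 pU1 pU2; have [dimU [H1U UB1]] := pU1; have [_ [H2U UB2]] := pU2.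
have [U2 L2U2 nUU2] := line_other_point U lL2.
case: (classic (incl H1 U2)) => [H1U2 | nH1U2].
  have [[dimU2 [H2U2 _]] _] := proj1 (HL2 _) L2U2.
  have H12 : incl H1 H2 := fun v H1v => meet_incl_bottom k_gt0 dimH2 dimU dimU2
    H2U H2U2 nUU2 v (H1U _ H1v) (H1U2 _ H1v).
  have nB21 : ~ incl B2 B1 by move/(trace_sameL (incl_eqdim dimH1 dimH2 H12))/nL.
  have [Z planeZ [B1Z B2Z]] := plane_common_bottom dimH1 dimB1 dimB2 dimU H1U UB1 UB2 nB21.
  by exists H1, Z; split.
have B21 := strong_lines_common_top strX X1 X2 pU1 pU2 L2U2 nUU2 nH1U2.
have nH21 : ~ incl H2 H1 by move/trace_sameL/(_ B21)/nL.
exists (meet H1 H2), B1; split => //; try by move=> v [].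
exact: plane_common_top k_gt1 dimH1 dimH2 dimU dimB1 H1U H2U UB1 nH21.
Qed.

(* In a plane whose bottom [Y] has dimension [k - 2] the two lines share the
   top and meet in the join of [H1] and [H2]; in the dual plane they share the
   bottom and meet in [meet B1 B2]. *)
Lemma plane_lines_meet {P} : planeP k P ->
  Defs.inE k m W P L1 -> Defs.inE k m W P L2 ->
  exists U, [/\ kpencil k H1 B1 U, kpencil k H2 B2 U,
    forall U', kpencil k H1 B1 U' -> P U' & forall U', kpencil k H2 B2 U' -> P U'].
Proof.
move=> [Y [Z [dimYZ [_ PE]]]] L1P L2P.
have inP H B : incl Y H -> incl B Z -> forall U, kpencil k H B U -> P U.
  by move=> YH BZ U /(sub_kpencil YH BZ) /PE.
have H1B1 := trace_incl HL1 lL1; have H2B2 := trace_incl HL2 lL2.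
case: dimYZ => [[dimY dimZ] | [dimY dimZ]].
  have [YH1 B1Z] := trace_in_plane dimH1 dimB1 dimZ HL1 lL1 L1P PE.
  have [YH2 B2Z] := trace_in_plane dimH2 dimB2 dimZ HL2 lL2 L2P PE.
  have ZB1 := incl_eqdim dimB1 dimZ B1Z; have ZB2 := incl_eqdim dimB2 dimZ B2Z.
  have nH21 : ~ incl H2 H1.
    by move/trace_sameL => /(_ (fun v B2v => ZB1 _ (B2Z _ B2v))) /nL.
  have kE : k.-1 = (k - 2).+1 by lia.
  have dimH1' := dimH1; have dimH2' := dimH2; rewrite kE in dimH1' dimH2'.
  have [U [dimU H1U H2U UZ]] := dim_join_hyperplanes dimY dimH1' dimH2' YH1 YH2 nH21.
  have {}UZ : incl U Z.
    by apply: (UZ _ _ dimZ); [move=> v /H1B1 /B1Z | move=> v /H2B2 /B2Z].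
  have kE' : (k - 2).+2 = k by lia.
  rewrite kE' in dimU; exists U; split; try exact: inP.
    by split => //; split => // v /UZ /ZB1.
  by split => //; split => // v /UZ /ZB2.
have [YH1 B1Z] := trace_in_plane dimH1 dimB1 dimZ HL1 lL1 L1P PE.
have [YH2 B2Z] := trace_in_plane dimH2 dimB2 dimZ HL2 lL2 L2P PE.
have H1Y := incl_eqdim dimY dimH1 YH1; have H2Y := incl_eqdim dimY dimH2 YH2.
have nB21 : ~ incl B2 B1.
  by move/(trace_sameL (fun v H2v => YH1 _ (H2Y _ H2v)))/nL.
have dimU := dim_meet_hyperplanes dimZ dimB1 dimB2 B1Z B2Z nB21.
exists (meet B1 B2); split; try exact: inP.
  by split => //; split => [v H1v|v []//]; split; [apply: H1B1 | apply/H2B2/YH2/H1Y].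
by split => //; split => [v H2v|v []//]; split; [apply/H1B1/YH1/H2Y | apply: H2B2].
Qed.

End TwoLines.

Lemma semibundle_plane {C X U L1 L2} : semibundle_at k m W X U C ->
  C L1 -> C L2 -> ~ sameL L1 L2 -> exists P,
    [/\ planeM k m W P, P U, in_pencil k m W P U L1 & in_pencil k m W P U L2].
Proof.
move=> [strX [_ HC]] /HC [lL1 [[l1 [cl1 l1U]] X1]] /HC [lL2 [[l2 [cl2 l2U]] X2]] nL.
have [H1 [B1 [dimH1 dimB1 HL1]]] := line_trace lL1.
have [H2 [B2 [dimH2 dimB2 HL2]]] := line_trace lL2.
have pU1 := proj1 (closure_line_trace dimH1 dimB1 HL1 lL1 cl1 U) l1U.
have pU2 := proj1 (closure_line_trace dimH2 dimB2 HL2 lL2 cl2 U) l2U.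
have [Y [Z [planeYZ YH1 YH2 B1Z B2Z]]] :=
  strong_lines_plane dimH1 dimB1 dimH2 dimB2 HL1 HL2 lL1 lL2 nL strX X1 X2 pU1 pU2.
have P1 := sub_kpencil (k := k) YH1 B1Z; have P2 := sub_kpencil (k := k) YH2 B2Z.
have pen1 := in_pencil_trace dimH1 dimB1 HL1 lL1 pU1 P1.
have pen2 := in_pencil_trace dimH2 dimB2 HL2 lL2 pU2 P2.
have LP1 := in_pencil_inE pen1; have LP2 := in_pencil_inE pen2.
exists (kpencil k Y Z); split => //; last exact: P1.
by split => //; exists L1, L2.
Qed.

Lemma flat_pi_clique C : flat k m W C -> clique (pi_rel k m W) C.
Proof. by move=> [P [PM HC]] L1 L2 /HC [_ L1P] /HC [_ L2P] _; exists P. Qed.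

Lemma semibundle_pi_clique C : semibundle k m W C -> clique (pi_rel k m W) C.
Proof.
move=> [X [U SB]] L1 L2 CL1 CL2 nL.
have [P [PM _ pen1 pen2]] := semibundle_plane SB CL1 CL2 nL.
exists P; split => //.
by split; [exact: in_pencil_inE pen1 | exact: in_pencil_inE pen2].
Qed.

Lemma proper_semibundle_rho_clique C :
  proper_semibundle k m W C -> clique (rho_rel k m W) C.
Proof.
move=> [X [U [SB sU]]] L1 L2 CL1 CL2 nL.
have [P [PM PU pen1 pen2]] := semibundle_plane SB CL1 CL2 nL.
by exists P, U.
Qed.

(* Two lines of a semiflat meet in a point of the plane.  Were it improper,
   neither line could be projective (a projective line contains its whole
   closure), so both would be affine lines of the chosen non-parallel family
   whose closures meet in an improper point, i.e. parallel. *)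
Lemma semiflat_rho_clique C : semiflat k m W C -> clique (rho_rel k m W) C.
Proof.
move=> [P [PM [A [HA [nonpar [_ HC]]]]]] L1 L2 CL1 CL2 nL.
have lineP L : C L -> line L /\ Defs.inE k m W P L.
  by move/HC => [[[lL _] LP] | /HA [[lL _] LP]].
have [lL1 L1P] := lineP _ CL1; have [lL2 L2P] := lineP _ CL2.
have [H1 [B1 [dimH1 dimB1 HL1]]] := line_trace lL1.
have [H2 [B2 [dimH2 dimB2 HL2]]] := line_trace lL2.
have [U [pU1 pU2 P1 P2]] :=
  plane_lines_meet dimH1 dimB1 dimH2 dimB2 HL1 HL2 lL1 lL2 nL PM.1 L1P L2P.
have cl1 := closure_line_kpencil dimH1 dimB1 HL1 lL1.
have cl2 := closure_line_kpencil dimH2 dimB2 HL2 lL2.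
have sU : point U.
  apply: NNPP => nsU.
  have inA L H B : C L -> hasdim H k.-1 -> hasdim B k.+1 -> is_trace H B L ->
      line L -> kpencil k H B U -> A L.
    move=> /HC [[[_ [l [cl lL]]] _] | //] dimH dimB HL lL' pU.
    have /HL [] // := lL U (proj2 (closure_line_trace dimH dimB HL lL' cl U) pU).
  have A1 := inA _ _ _ CL1 dimH1 dimB1 HL1 lL1 pU1.
  have A2 := inA _ _ _ CL2 dimH2 dimB2 HL2 lL2 pU2.
  apply: (nonpar _ _ A1 A2 nL); split; first exact: (HA _ A1).1.
  split; first exact: (HA _ A2).1.
  by exists (kpencil k H1 B1), (kpencil k H2 B2), U.
exists P, U; split => //; split; first exact: (P1 _ pU1).
split => //; split; first exact: (in_pencil_trace dimH1 dimB1 HL1 lL1 pU1 P1).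
exact: (in_pencil_trace dimH2 dimB2 HL2 lL2 pU2 P2).
Qed.

End Lines.

End SpineSpace.

Theorem lemma2p1 (R : unitRingType) (V : lmodType R) (HR : division_ring R)
  (n k w m : nat) (W : @subsp R V)
  (HV : hasdim (fun _ : V => True) n) (Hn : (3 <= n)%N)
  (Hk1 : (1 < k)%N) (Hk2 : (k < n - 1)%N)
  (HW : hasdim W w)
  (Hm1 : (k <= m + (n - w))%N) (Hm2 : (m <= minn k w)%N) :
  ((forall C, flat k m W C -> clique (pi_rel k m W) C) /\
   (forall C, semibundle k m W C -> clique (pi_rel k m W) C)) /\
  ((forall C, semiflat k m W C -> clique (rho_rel k m W) C) /\
   (forall C, proper_semibundle k m W C -> clique (rho_rel k m W) C)).
Proof.
split; split.
- exact: flat_pi_clique.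
- exact: (semibundle_pi_clique HR k m W Hk1).
- exact: (semiflat_rho_clique HR k m W Hk1).
- exact: (proper_semibundle_rho_clique HR k m W Hk1).
Qed.
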